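(* Let $D$ be an $n\times n$ distance matrix and let $q_0$ be the smallest $q\in\mathbb N$ such that $D^{(q)}=D$. Then every graph realisation $(G=(V,E),\Phi)$ of $D$ satisfies $|V|\ge n+(q_0-1)$.
   Context: $[n]=\{1,\dots,n\}$. An $n\times n$ matrix $D$ with non-negative integer entries is a distance matrix if (i) $D_{ii}=0$ for all $i$ and $D_{ij}>0$ for all $i\ne j$; (ii) $D$ is symmetric; (iii) $D_{iw}+D_{wj}\ge D_{ij}$ for all $i,j,w\in[n]$. For $q\in\mathbb N$, the $q$-skeleton $G^q$ of $D$ is the edge-weighted graph with vertex set $[n]$ having an edge $\{i,j\}$ ($i<j$) if and only if $D_{ij}\le q$, this edge having weight (length) $D_{ij}$. $D^{(q)}$ denotes the $n\times n$ matrix whose $(i,j)$ entry is the weighted shortest-path distance between $i$ and $j$ in $G^q$ (equal to $\infty$ if no path exists). A graph realisation of $D$ is a pair $(G,\Phi)$, where $G=(V,E)$ is a finite simple undirected unweighted graph and $\Phi:[n]\to V$ is an injective map such that $d_G(\Phi(i),\Phi(j))=D_{ij}$ for all $i,j\in[n]$; here $d_G$ denotes the shortest-path distance in $G$ (equal to $\infty$ if no path exists). *)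

From mathcomp Require Import all_boot all_algebra.
Set Implicit Arguments. Unset Strict Implicit. Unset Printing Implicit Defensive.

(* Distances and weights are natural numbers; "infinity" (no path) is encoded
   by [None] in an [option nat]. *)

Definition is_distance_matrix (n : nat) (D : 'M[nat]_n) : Prop :=
  [/\ (forall i, D i i = 0),
      (forall i j, i != j -> 0 < D i j),
      (forall i j, D i j = D j i) &
      (forall i j w, D i j <= D i w + D w j)].

Definition skel_edge (n : nat) (D : 'M[nat]_n) (q : nat) (i j : 'I_n) : bool :=
  (i != j) && (D i j <= q).

Fixpoint walk_weight (n : nat) (D : 'M[nat]_n) (x : 'I_n) (p : seq 'I_n) : nat :=
  if p is y :: p' then D x y + walk_weight D y p' else 0.

Definition skel_walk (n : nat) (D : 'M[nat]_n) (q : nat) (x y : 'I_n) (p : seq 'I_n) : bool :=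
  path (skel_edge D q) x p && (last x p == y).

(** [skel_dist_is D q i j d] : the (i,j) entry of D^(q), i.e. the weighted
    shortest-path distance from i to j in G^q, equals d (None = infinity). *)
Definition skel_dist_is (n : nat) (D : 'M[nat]_n) (q : nat) (i j : 'I_n) (d : option nat) : Prop :=
  match d with
  | Some m => (exists p, skel_walk D q i j p /\ walk_weight D i p = m) /\
              (forall p, skel_walk D q i j p -> m <= walk_weight D i p)
  | None => forall p, ~~ skel_walk D q i j p
  end.

Definition skeleton_reproduces (n : nat) (D : 'M[nat]_n) (q : nat) : Prop :=
  forall i j, skel_dist_is D q i j (Some (D i j)).

Definition simple_graph (V : finType) (e : rel V) : Prop :=
  symmetric e /\ irreflexive e.

Definition graph_dist_is (V : finType) (e : rel V) (x y : V) (d : option nat) : Prop :=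
  match d with
  | Some m => (exists p, path e x p /\ last x p = y /\ size p = m) /\
              (forall p, path e x p -> last x p = y -> m <= size p)
  | None => forall p, path e x p -> last x p <> y
  end.

Definition graph_realisation (n : nat) (D : 'M[nat]_n) (V : finType) (e : rel V)
    (Phi : 'I_n -> V) : Prop :=
  [/\ simple_graph e, injective Phi &
      forall i j, graph_dist_is e (Phi i) (Phi j) (Some (D i j))].

From mathcomp Require Import all_boot all_algebra.

Set Implicit Arguments.
Unset Strict Implicit.
Unset Printing Implicit Defensive.

(* Let q0 = q + 1 with D^(q) <> D at some entry (i, j), and follow a shortest
   path of G from Phi i to Phi j; its length is D_ij.  Between two consecutive
   vertices Phi k, Phi k' of Phi's image the path has length t + 1, where t
   counts the intermediate vertices outside the image, and D_kk' <= t + 1.  If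
   every such gap had t < q, the image vertices would form a walk of G^q of
   weight at most D_ij, forcing D^(q)_ij = D_ij.  So one gap contains at least q
   distinct vertices outside the image, and |V| >= n + q. *)

Lemma dist_le_walk_weight (n : nat) (D : 'M[nat]_n) (x : 'I_n) (p : seq 'I_n) :
  is_distance_matrix D -> D x (last x p) <= walk_weight D x p.
Proof.
case=> D0 _ _ Dtri; elim: p x => [|y p IHp] x /=; first by rewrite D0.
by rewrite (leq_trans (Dtri x _ y)) // leq_add2l IHp.
Qed.

Lemma skel_dist_is_of_walk (n : nat) (D : 'M[nat]_n) (q : nat) (i j : 'I_n)
    (w : seq 'I_n) :
  is_distance_matrix D -> skel_walk D q i j w -> walk_weight D i w <= D i j ->
  skel_dist_is D q i j (Some (D i j)).
Proof.
move=> distD walk_w le_w; split=> [|w' /andP[_ /eqP <-]].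
  exists w; split=> //; apply/eqP; rewrite eqn_leq le_w.
  by case/andP: walk_w => _ /eqP <-; rewrite dist_le_walk_weight.
exact: dist_le_walk_weight.
Qed.

Lemma card_add_count_predC (T : finType) (A : {pred T}) (s : seq T) :
  uniq s -> #|A| + count [predC A] s <= #|T|.
Proof.
move=> s_uniq; rewrite -(cardC A) leq_add2l -size_filter cardE.
apply: uniq_leq_size; first exact: filter_uniq.
by move=> x; rewrite mem_filter mem_enum => /andP[].
Qed.

Lemma uniq_shortest_path (T : finType) (e : rel T) (x y : T) (m : nat) :
  graph_dist_is e x y (Some m) ->
  exists2 p, [/\ path e x p, last x p = y & uniq (x :: p)] & size p <= m.
Proof.
case=> -[p [e_p [<- <-]]] _; case: (shortenP e_p) => p' e_p' p'_uniq sub_p'.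
exists p' => //; apply: uniq_leq_size sub_p'.
by case/andP: p'_uniq.
Qed.

Section Realisation.

Variables (n : nat) (D : 'M[nat]_n) (V : finType) (e : rel V) (Phi : 'I_n -> V).
Hypothesis Phi_inj : injective Phi.
Hypothesis Phi_dist : forall i j, graph_dist_is e (Phi i) (Phi j) (Some (D i j)).

Lemma skel_walk_of_path (q : nat) (k j : 'I_n) (p : seq V) :
  path e (Phi k) p -> last (Phi k) p = Phi j ->
  count [predC codom Phi] p < q ->
  exists2 w, skel_walk D q k j w & walk_weight D k w <= size p.
Proof.
have [N] := ubnP (size p); elim: N => // N IHN in p k *.
case: p => [|y p] sz_p e_p last_p out_p.
  by exists [::]; rewrite // /skel_walk /= (Phi_inj last_p).
have img_p : has [in codom Phi] (y :: p).
  by apply/hasP; exists (Phi j); [rewrite -last_p /= mem_last | exact: codom_f].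
move: (y :: p) img_p sz_p e_p last_p out_p => {}p.
case/split_find=> _ r p2 /codomP[k' ->] r_out; clear y p.
rewrite cat_path last_cat last_rcons => sz_p /andP[e_r e_p2] last_p2.
rewrite cat_rcons count_cat /= codom_f add0n => out_p.
move: sz_p; rewrite cat_rcons size_cat /= -addSnnS ltnS => sz_p.
have {r_out} out_r : count [predC codom Phi] r = size r.
  by apply/eqP; rewrite -all_count all_predC.
have le_kk' : D k k' <= (size r).+1.
  by rewrite -(size_rcons r (Phi k')) (proj2 (Phi_dist k k')) ?last_rcons.
have [||w walk_w le_w] := IHN p2 k' _ e_p2 last_p2 _.
- by rewrite (leq_trans _ sz_p) // addSnnS leq_addl.
- exact: leq_ltn_trans (leq_addl _ _) out_p.
have [->|neq_kk'] := eqVneq k k'.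
  by exists w; rewrite // (leq_trans le_w) // leq_addl.
exists (k' :: w); last by rewrite /= leq_add.
rewrite /skel_walk /= /skel_edge neq_kk' (leq_trans le_kk') //.
by rewrite -out_r (leq_ltn_trans (leq_addr _ _) out_p).
Qed.

Lemma skeleton_reproduces_of_card (q : nat) :
  is_distance_matrix D -> #|V| < n + q -> skeleton_reproduces D q.
Proof.
move=> distD small_V i j.
have [p [e_p last_p /andP[_ p_uniq]] sz_p] := uniq_shortest_path (Phi_dist i j).
have out_p : count [predC codom Phi] p < q.
  have := card_add_count_predC [in codom Phi] p_uniq.
  rewrite card_codom // card_ord => le_V.
  by rewrite -(ltn_add2l n) (leq_ltn_trans le_V).
have [w walk_w le_w] := skel_walk_of_path e_p last_p out_p.
exact: skel_dist_is_of_walk walk_w (leq_trans le_w sz_p).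
Qed.

End Realisation.

Theorem mainTheorem10 (n : nat) (D : 'M[nat]_n) (q0 : nat) :
  is_distance_matrix D ->
  skeleton_reproduces D q0 ->
  (forall q, q < q0 -> ~ skeleton_reproduces D q) ->
  forall (V : finType) (e : rel V) (Phi : 'I_n -> V),
    graph_realisation D e Phi ->
    n + q0 - 1 <= #|V|.
Proof.
move=> distD _ minimal_q0 V e Phi [_ Phi_inj Phi_dist].
case: q0 minimal_q0 => [|q] minimal_q0.
  by rewrite addn0 (leq_trans (leq_subr 1 n)) // -{1}(card_ord n) (leq_card _ Phi_inj).
rewrite addnS subn1 /= leqNgt; apply/negP => small_V.
exact: minimal_q0 q (ltnSn q) (skeleton_reproduces_of_card Phi_inj Phi_dist distD small_V).
Qed.
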